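(* For every constant $c>0$ there is a constant $K$, depending only on $c$, such that the following holds. Let $G$ be a finite, undirected, connected, unweighted, loop-free graph without multi-edges, let $r\in V(G)$, and let $C_1,\dots,C_l$ be the connected components of the graph obtained from $G$ by deleting $r$. For $i\in\{1,\dots,l\}$ let $V_i=\sum_{j\in\{1,\dots,l\}\setminus\{i\}}|V(C_j)|$. If $V_i\ge c\,|V(G)|$ for all $i\in\{1,\dots,l\}$ (i.e., $V_i=\Theta(|V(G)|)$ for all $i$), then for every $v\in V(G)$, $$\delta_{v\bullet}(r)\le K\cdot\overline{\delta(r)},\qquad\text{where }\ \overline{\delta(r)}=\frac{1}{|V(G)|}\sum_{u\in V(G)}\delta_{u\bullet}(r);$$ that is, the quantity $\mu(r)$ (a value with $\delta_{v\bullet}(r)\le\mu(r)\,\overline{\delta(r)}$ for all $v$) can be taken to be a constant.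
   Context: For $s,t\in V(G)$, $\sigma_{st}$ is the number of shortest paths between $s$ and $t$, and $\sigma_{st}(v)$ is the number of those that pass through $v$ as an internal vertex. The dependency score of $s$ on $v$ is $\delta_{s\bullet}(v)=\sum_{t\in V(G)\setminus\{v,s\}}\frac{\sigma_{st}(v)}{\sigma_{st}}$ for $s\neq v$, and $\delta_{v\bullet}(v)=0$. The paper's statement says ''if for all $i$, $V_i=\Theta(|V(G)|)$, then $\mu(r)$ is a constant''; the claim is the uniform (constant-bounded) reading of this asymptotic statement. *)

From HB Require Import structures.
From mathcomp Require Import all_boot all_order all_algebra.
Set Implicit Arguments. Unset Strict Implicit. Unset Printing Implicit Defensive.
Import Order.TTheory GRing.Theory Num.Theory.

Section Graphs.
Variable T : finType.
Variable e : rel T.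

Definition simple_graph := symmetric e /\ irreflexive e.
Definition connected_graph := forall x y : T, connect e x y.

Definition walk_set (s t : T) (n : nat) : {set n.-tuple T} :=
  [set p : n.-tuple T | path e s p && (last s p == t)].

(* distance: least n with a walk of length n from s to t (in a connected graph
   this is < #|T|, so searching over iota 0 #|T| suffices) *)
Definition dist (s t : T) : nat :=
  find (fun n => [exists p : n.-tuple T, path e s p && (last s p == t)])
       (iota 0 #|T|).

Definition sigma (s t : T) : nat := #|walk_set s t (dist s t)|.

Definition sigma_via (s t v : T) : nat :=
  #|[set p in walk_set s t (dist s t) | (v \in (p : seq T)) && (v != s) && (v != t)]|.

Local Open Scope ring_scope.

Definition dependency (R : realFieldType) (s v : T) : R :=
  if s == v then 0 else
  \sum_(t | (t != v) && (t != s)) ((sigma_via s t v)%:R / (sigma s t)%:R).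

Definition avg_dependency (R : realFieldType) (v : T) : R :=
  (#|T|%:R)^-1 * \sum_(u : T) dependency R u v.

Definition del_rel (r : T) : rel T := fun x y => [&& e x y, x != r & y != r].

Definition comp_del (r x : T) : {set T} := [set y | (y != r) && connect (del_rel r) x y].

End Graphs.

(* With K := 1/c.  Any dependency score is at most |V(G)| - 1, since each of its
   terms is a ratio of at most one.  Conversely, for u <> r every vertex t outside
   the component of G - r containing u is reached from u only through r, so it
   contributes exactly 1 to the dependency of u on r; hence that dependency is at
   least V_i >= c |V(G)|, and the average dependency on r is at least
   c (|V(G)| - 1). *)
From HB Require Import structures.
From mathcomp Require Import all_boot all_order all_algebra.
Set Implicit Arguments. Unset Strict Implicit. Unset Printing Implicit Defensive.
Import Order.TTheory GRing.Theory Num.Theory.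

Section ShortestWalks.
Variables (T : finType) (e : rel T).

Lemma path_del_rel (r u : T) (p : seq T) :
  u != r -> r \notin p -> path e u p -> path (del_rel e r) u p.
Proof.
elim: p u => [|y p IHp] u //= ur; rewrite in_cons negb_or eq_sym => /andP[yr rp].
by case/andP=> euy py; rewrite {1}/del_rel euy ur yr IHp.
Qed.

Lemma shortest_walk_exists (u t : T) : connect e u t ->
  exists q : (dist e u t).-tuple T, path e u q && (last u q == t).
Proof.
case/connectP=> p p_path ->; case: (shortenP p_path) => p' p'_path p'_uniq _.
set P := fun n => [exists q : n.-tuple T, path e u q && (last u q == last u p')].
have hasP : has P (iota 0 #|T|).
  apply/hasP; exists (size p').
    rewrite mem_iota add0n; have := max_card (mem (u :: p')).
    by rewrite (card_uniqP p'_uniq).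
  by apply/existsP; exists (in_tuple p'); rewrite p'_path eqxx.
have := nth_find 0 hasP.
rewrite nth_iota ?add0n => [/existsP[q]|]; first by exists q.
by rewrite -[X in (_ < X)%N](size_iota 0 #|T|) -has_find.
Qed.

Lemma sigma_gt0 (u t : T) : connect e u t -> (0 < sigma e u t)%N.
Proof.
by case/shortest_walk_exists=> q qP; apply/card_gt0P; exists q; rewrite inE.
Qed.

Lemma sigma_via_le_sigma (s t v : T) : (sigma_via e s t v <= sigma e s t)%N.
Proof. by apply: subset_leq_card; apply/subsetP => p; rewrite inE => /andP[]. Qed.

Lemma sigma_via_separated (u t r : T) : u != r -> t != r ->
  ~~ connect (del_rel e r) u t -> sigma_via e u t r = sigma e u t.
Proof.
move=> ur tr not_utr; apply: eq_card => p.
rewrite !inE [r == u]eq_sym [r == t]eq_sym ur tr !andbT.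
case/boolP: (r \in _) => rp; rewrite ?andbT ?andbF //.
apply/esym/negbTE/andP => -[pP /eqP pt].
by case/negP: not_utr; apply/connectP; exists p; first exact: path_del_rel.
Qed.

Lemma card_separated (r u : T) :
  #|[pred t | (t != r) && ~~ connect (del_rel e r) u t]|
    = (#|T| - 1 - #|comp_del e r u|)%N.
Proof.
set C := comp_del e r u; set S := [pred t | _].
have := cardID (mem C) (predC1 r); rewrite cardC1 -subn1.
rewrite (@eq_card _ [predI predC1 r & mem C] C) => [|t]; last first.
  by rewrite !inE; case: (t != r).
rewrite (@eq_card _ [predD predC1 r & mem C] S) => [<-|t]; first by rewrite addKn.
by rewrite !inE andbC; case: (t != r).
Qed.

End ShortestWalks.

Local Open Scope ring_scope.

Section Dependency.
Variables (R : realFieldType) (T : finType) (e : rel T).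

Lemma dependency_ge0 (s v : T) : 0 <= dependency e R s v.
Proof.
by rewrite /dependency; case: ifP => // _; apply: sumr_ge0 => t _; rewrite divr_ge0.
Qed.

Lemma natr_ratio_le1 (a b : nat) : (a <= b)%N -> (a%:R / b%:R : R) <= 1.
Proof.
case: (posnP b) => [-> | b_gt0 ab]; first by rewrite leqn0 => /eqP->; rewrite mul0r.
by rewrite ler_pdivrMr ?ltr0n // mul1r ler_nat.
Qed.

Lemma dependency_le (s v : T) : dependency e R s v <= (#|T|.-1)%:R.
Proof.
rewrite /dependency; case: ifP => _; first exact: ler0n.
rewrite -(cardC1 v) -sum1_card natr_sum.
rewrite [X in _ <= X]big_mkcond [X in X <= _]big_mkcond /=.
apply: ler_sum => t _; rewrite !inE; case: (t != v) => //=.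
by case: (t != s) => //; apply: natr_ratio_le1; apply: sigma_via_le_sigma.
Qed.

Lemma dependency_ge_separated (u r : T) : connected_graph e -> u != r ->
  ((#|T| - 1 - #|comp_del e r u|)%N)%:R <= dependency e R u r.
Proof.
move=> e_conn ur; rewrite /dependency (negbTE ur) -card_separated.
rewrite -sum1_card natr_sum.
rewrite [X in _ <= X]big_mkcond [X in X <= _]big_mkcond /=.
apply: ler_sum => t _; rewrite !inE.
case/boolP: (_ && _) => [/andP[tr not_utr] | _]; last first.
  by case: ifP; rewrite ?divr_ge0.
have tu : t != u by apply: contraNneq not_utr => ->; exact: connect0.
rewrite tr tu /= sigma_via_separated // divff // pnatr_eq0 -lt0n.
exact: sigma_gt0.
Qed.

End Dependency.

Theorem theorem2 (R : realFieldType) (c : R) :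
  0 < c ->
  exists K : R,
    forall (T : finType) (e : rel T) (r : T),
      simple_graph e -> connected_graph e ->
      (* every component C_i of G - r: V_i = |V(G)| - 1 - |C_i| >= c |V(G)| *)
      (forall x : T, x != r ->
         c * (#|T|%:R) <= ((#|T| - 1 - #|comp_del e r x|)%N)%:R) ->
      forall v : T, dependency e R v r <= K * avg_dependency e R r.
Proof.
move=> c_gt0; exists c^-1 => T e r _ e_conn V_ge v.
have T_gt0 : (0 < #|T|)%N by apply/card_gt0P; exists r.
have sum_ge : (c * #|T|%:R) * (#|T|.-1)%:R <= \sum_u dependency e R u r.
  rewrite mulr_natr -(cardC1 r) -sumr_const big_mkcond /=.
  apply: ler_sum => u _; rewrite !inE.
  case: ifP => [ur | _]; last exact: dependency_ge0.
  by apply: le_trans (V_ge u ur) _; apply: dependency_ge_separated.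
apply: le_trans (dependency_le R e v r) _.
rewrite /avg_dependency ler_pdivlMl // ler_pdivlMl ?ltr0n //.
by rewrite mulrA [_ * c]mulrC.
Qed.
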